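(* Let $f$, $g$, $\xi$, $F$ satisfy the standing assumptions below, and let $x$ be the unique continuous solution of $x'(t)=-f(x(t))+g(t)$, $t>0$, $x(0)=\xi$. Suppose there exist $\delta>0$ and a function $\phi$ which is increasing on $(0,\delta)$ with $\lim_{x\to0^+}f(x)/\phi(x)=1$. If \[ \lim_{t\to\infty}\frac{g(t)}{f(F^{-1}(t))}=0, \] then \[ \lim_{t\to\infty}\frac{F(x(t))}{t}=1 . \]
   Context: Standing assumptions: $f\in C(\mathbb{R};\mathbb{R})$ is locally Lipschitz continuous on $\mathbb{R}$, $f(0)=0$ and $xf(x)>0$ for $x\neq0$; $g\in C([0,\infty);\mathbb{R})$ with $g(t)>0$ for $t>0$; the initial value $\xi>0$. Define $F(x)=\int_x^1 \frac{du}{f(u)}$ for $x>0$, and assume $\lim_{x\to0^+}F(x)=+\infty$. $F$ is strictly decreasing on $(0,\infty)$ and $F^{-1}$ denotes its inverse (defined in particular on $[0,\infty)$, with $F^{-1}(t)\to0$ as $t\to\infty$). *)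

From Stdlib Require Import Reals Lra ClassicalEpsilon.
Open Scope R_scope.

(* Oriented Riemann integral of h from a to b (Stdlib convention: RiemannInt
   is oriented). When h is not Riemann integrable the value is 0 (never used
   in the theorem, since 1/f is continuous on (0,oo)). The value does not
   depend on the chosen integrability proof (RiemannInt_P5). *)
Definition RInt (h : R -> R) (a b : R) : R :=
  match excluded_middle_informative (exists pr : Riemann_integrable h a b, True) with
  | left H => RiemannInt (proj1_sig (constructive_indefinite_description _ H))
  | right _ => 0
  end.

Definition Fdef (f : R -> R) (x : R) : R := RInt (fun u => / f u) x 1.

(* F^{-1}(t): the (unique, since F is strictly decreasing) y > 0 with F y = t. *)
Definition Finv (f : R -> R) (t : R) : R :=
  epsilon (inhabits 0) (fun y => 0 < y /\ Fdef f y = t).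

Definition locally_lipschitz (f : R -> R) : Prop :=
  forall a b : R, exists L : R, forall u v : R,
    a <= u <= b -> a <= v <= b -> Rabs (f u - f v) <= L * Rabs (u - v).

Definition cont_on_nonneg (h : R -> R) : Prop :=
  forall t, 0 <= t -> forall eps, 0 < eps -> exists d, 0 < d /\
    forall s, 0 <= s -> Rabs (s - t) < d -> Rabs (h s - h t) < eps.

Definition lim_infty (h : R -> R) (l : R) : Prop :=
  forall eps, 0 < eps -> exists T, forall t, T < t -> Rabs (h t - l) < eps.

Definition lim_0plus (h : R -> R) (l : R) : Prop :=
  forall eps, 0 < eps -> exists d, 0 < d /\
    forall x, 0 < x < d -> Rabs (h x - l) < eps.

Definition lim_0plus_infty (h : R -> R) : Prop :=
  forall M, exists d, 0 < d /\ forall x, 0 < x < d -> M < h x.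

From Pilot Require Import Defs.
From Stdlib Require Import Reals Lra ClassicalEpsilon.
From Coquelicot Require Import Coquelicot.
Open Scope R_scope.

(* Write u(t) = F(x(t)).  Since F' = -1/f, the chain rule gives
   u' = 1 - g / f(x) < 1, so u(t) <= t + C.  For the lower bound fix ep > 0.
   Whenever u(t) <= t we have x(t) >= F^{-1}(t); as x is eventually bounded
   (x + F^{-1} is eventually nonincreasing) and f is monotone near 0 up to a
   constant factor (it is asymptotic to the nondecreasing phi), f(F^{-1}(t))
   is dominated by 3 f(x(t)), hence g / f(x) < ep for large t and u' > 1 - ep.
   A barrier argument then keeps u(t) - (1 - ep) t bounded below, and the two
   bounds squeeze u(t) / t to 1. *)

Lemma lipschitz_continuous (f : R -> R) :
  locally_lipschitz f -> forall c, continuity_pt f c.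
Proof.
  intros Hlip c eps Heps.
  destruct (Hlip (c - 1) (c + 1)) as [L HL].
  set (L' := Rabs L + 1).
  assert (HL' : 0 < L') by (unfold L'; pose proof (Rabs_pos L); lra).
  assert (HLL' : L <= L') by (unfold L'; pose proof (Rle_abs L); lra).
  exists (Rmin 1 (eps / L')); split.
  - apply Rmin_pos; [lra | apply Rdiv_lt_0_compat; lra].
  - intros y [_ Hy]; simpl in Hy; unfold R_dist in Hy; simpl; unfold R_dist.
    pose proof (Rmin_l 1 (eps / L')); pose proof (Rmin_r 1 (eps / L')).
    assert (Hy1 : Rabs (y - c) < 1) by lra.
    pose proof (Rabs_def2 _ _ Hy1).
    assert (Hlc := HL y c ltac:(lra) ltac:(lra)).
    assert (L * Rabs (y - c) <= L' * Rabs (y - c))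
      by (apply Rmult_le_compat_r; [apply Rabs_pos | lra]).
    assert (L' * Rabs (y - c) < L' * (eps / L')) by (apply Rmult_lt_compat_l; lra).
    replace (L' * (eps / L')) with eps in * by (field; lra).
    lra.
Qed.

Definition cont_on_interval (h : R -> R) (a b : R) : Prop :=
  forall t, a <= t <= b -> forall eps, 0 < eps -> exists d, 0 < d /\
    forall s, a <= s <= b -> Rabs (s - t) < d -> Rabs (h s - h t) < eps.

Lemma derivable_cont_on_interval (h h' : R -> R) a b :
  (forall t, a <= t <= b -> derivable_pt_lim h t (h' t)) -> cont_on_interval h a b.
Proof.
  intros Hd t Ht eps Heps.
  assert (Hc : continuity_pt h t)
    by (apply derivable_continuous_pt; exists (h' t); apply Hd; auto).
  destruct (Hc eps Heps) as [d [Hd0 Hclose]].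
  exists d; split; auto.
  intros s Hs Hst. destruct (Req_dec s t) as [-> | Hne].
  - rewrite Rminus_diag, Rabs_R0; lra.
  - apply (Hclose s). split; [split; [exact I | auto] | exact Hst].
Qed.

Lemma first_hit (h : R -> R) a b K :
  a <= b -> cont_on_interval h a b -> K < h a -> h b <= K ->
  exists s, a < s <= b /\ h s <= K /\ forall r, a <= r < s -> K < h r.
Proof.
  intros Hab Hc Ha Hb.
  set (E := fun s => a <= s <= b /\ forall r, a <= r <= s -> K < h r).
  assert (HEa : E a) by (split; [lra | intros r Hr; replace r with a by lra; exact Ha]).
  destruct (completeness E) as [m [Hub Hlub]].
  { exists b. intros y [Hy _]. lra. }
  { exists a. exact HEa. }
  assert (Ham : a <= m) by (apply Hub; exact HEa).
  assert (Hmb : m <= b) by (apply Hlub; intros y [Hy _]; lra).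
  assert (Hbefore : forall r, a <= r < m -> K < h r).
  { intros r Hr. destruct (Rlt_or_le K (h r)) as [| Hle]; auto.
    assert (m <= r); [| lra].
    apply Hlub. intros y [Hy Hy']. destruct (Rle_or_lt y r) as [| Hry]; auto.
    specialize (Hy' r ltac:(lra)). lra. }
  assert (Hm : h m <= K).
  { destruct (Rle_or_lt (h m) K) as [| Hgt]; auto. exfalso.
    destruct (Req_dec m b) as [-> | Hmb'].
    { lra. }
    destruct (Hc m ltac:(lra) (h m - K) ltac:(lra)) as [d [Hd Hclose]].
    set (s := Rmin (m + d / 2) b).
    assert (Hs1 : s <= m + d / 2) by apply Rmin_l.
    assert (Hs2 : s <= b) by apply Rmin_r.
    assert (Hms : m < s) by (apply Rmin_glb_lt; lra).
    assert (Hs : E s).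
    { split; [lra |]. intros r Hr. destruct (Rlt_or_le r m) as [| Hrm].
      - apply Hbefore; lra.
      - specialize (Hclose r ltac:(lra) ltac:(apply Rabs_def1; lra)).
        apply Rabs_def2 in Hclose. lra. }
    assert (s <= m) by (apply Hub; exact Hs).
    lra. }
  exists m. split; [| split]; auto.
  destruct (Req_dec a m) as [<- | ]; lra.
Qed.

Lemma deriv_pos_left (h : R -> R) s l :
  derivable_pt_lim h s l -> 0 < l ->
  forall d, 0 < d -> exists r, s - d < r < s /\ h r < h s.
Proof.
  intros Hd Hl d Hd0.
  destruct (Hd l Hl) as [[e He] Hquot]; simpl in Hquot.
  set (k := - Rmin d e / 2).
  assert (Hm1 := Rmin_l d e). assert (Hm2 := Rmin_r d e).
  assert (Hm0 : 0 < Rmin d e) by (apply Rmin_pos; lra).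
  assert (Hk : k < 0) by (unfold k; lra).
  specialize (Hquot k ltac:(lra) ltac:(rewrite Rabs_left; unfold k; lra)).
  apply Rabs_def2 in Hquot.
  assert (Hpos : 0 < (h (s + k) - h s) / k) by lra.
  exists (s + k). split; [unfold k; lra |].
  unfold Rdiv in Hpos.
  assert (/ k < 0) by (apply Rinv_lt_0_compat; lra).
  nra.
Qed.

Lemma stays_above (h h' : R -> R) a b K :
  a <= b -> cont_on_interval h a b ->
  (forall t, a < t <= b -> derivable_pt_lim h t (h' t)) ->
  (forall t, a < t <= b -> h t <= K -> 0 < h' t) ->
  K < h a -> K < h b.
Proof.
  intros Hab Hc Hd Hbar Ha.
  destruct (Rlt_or_le K (h b)) as [| Hb]; auto. exfalso.
  destruct (first_hit h a b K Hab Hc Ha Hb) as [s [Hs [HsK Hbefore]]].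
  destruct (deriv_pos_left h s (h' s) (Hd s Hs) (Hbar s Hs HsK) (s - a) ltac:(lra))
    as [r [Hr Hrs]].
  specialize (Hbefore r ltac:(lra)). lra.
Qed.

Lemma increment_le (h h' : R -> R) a b M :
  a <= b -> (forall t, a <= t <= b -> derivable_pt_lim h t (h' t)) ->
  (forall t, a < t < b -> h' t <= M) -> h b <= h a + M * (b - a).
Proof.
  intros Hab Hd HM.
  destruct (Req_dec a b) as [<- | Hne]; [lra |].
  destruct (MVT_cor2 h h' a b ltac:(lra) Hd) as [c [Hc Hcab]].
  specialize (HM c Hcab). nra.
Qed.

Lemma ratio_to_one (u : R -> R) :
  (exists C, forall t, 1 <= t -> u t <= t + C) ->
  (forall ep, 0 < ep -> exists T K, forall t, T <= t -> (1 - ep) * t + K <= u t) ->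
  lim_infty (fun t => u t / t) 1.
Proof.
  intros [C HC] Hlow eps Heps.
  destruct (Hlow (eps / 2) ltac:(lra)) as [T [K HK]].
  set (A := Rabs C + Rabs K + 1).
  assert (HA : 0 < A) by (unfold A; pose proof (Rabs_pos C); pose proof (Rabs_pos K); lra).
  exists (Rmax (Rmax T 1) (2 * A / eps)). intros t Ht.
  assert (H1 := Rmax_l (Rmax T 1) (2 * A / eps)).
  assert (H2 := Rmax_r (Rmax T 1) (2 * A / eps)).
  assert (H3 := Rmax_l T 1). assert (H4 := Rmax_r T 1).
  assert (Ht0 : 0 < t) by lra.
  assert (HAt : 2 * A < eps * t).
  { assert (eps * (2 * A / eps) = 2 * A) by (field; lra). nra. }
  specialize (HC t ltac:(lra)). specialize (HK t ltac:(lra)).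
  pose proof (Rle_abs C). pose proof (Rle_abs (- K)). rewrite Rabs_Ropp in *.
  replace (u t / t - 1) with ((u t - t) / t) by (field; lra).
  unfold Rdiv. rewrite Rabs_mult, (Rabs_right (/ t)) by (left; apply Rinv_0_lt_compat; lra).
  apply (Rmult_lt_reg_r t); auto. rewrite Rmult_assoc, Rinv_l, Rmult_1_r by lra.
  pose proof (Rabs_pos C); pose proof (Rabs_pos K).
  unfold A in HAt. apply Rabs_def1; nra.
Qed.

(* Solutions of x' = -f(x) + g with x(0) > 0, g > 0 and f <= 0 on (-oo, 0]
   stay positive: at a first zero the derivative would be positive. *)
Lemma solution_pos (f g x : R -> R) :
  (forall y, y <= 0 -> f y <= 0) -> (forall t, 0 < t -> g t > 0) ->
  cont_on_nonneg x -> 0 < x 0 ->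
  (forall t, 0 < t -> derivable_pt_lim x t (- f (x t) + g t)) ->
  forall t, 0 <= t -> 0 < x t.
Proof.
  intros Hf Hg Hxc Hx0 Hxd t Ht.
  apply (stays_above x (fun s => - f (x s) + g s) 0 t 0); auto.
  - intros s Hs eps Heps. destruct (Hxc s ltac:(lra) eps Heps) as [d [Hd Hclose]].
    exists d; split; auto. intros r Hr. apply Hclose; lra.
  - intros s Hs. apply Hxd; lra.
  - intros s Hs Hxs. specialize (Hf _ Hxs). specialize (Hg s ltac:(lra)). lra.
Qed.

Section PrimitiveF.

Variable f : R -> R.
Hypothesis f_cont : forall c, continuity_pt f c.
Hypothesis f_sign : forall u, u <> 0 -> u * f u > 0.

Lemma f_pos u : 0 < u -> 0 < f u.
Proof. intros Hu. specialize (f_sign u ltac:(lra)). nra. Qed.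

Lemma inv_f_cont z : 0 < z -> continuity_pt (fun u => / f u) z.
Proof.
  intros Hz. apply (continuity_pt_inv f z (f_cont z)).
  pose proof (f_pos z Hz). lra.
Qed.

Lemma inv_f_integrable a b : 0 < a -> 0 < b -> ex_RInt (fun u => / f u) a b.
Proof.
  intros Ha Hb. apply (@ex_RInt_continuous R_CompleteNormedModule).
  intros z Hz. apply continuity_pt_filterlim, inv_f_cont.
  assert (0 < Rmin a b) by (apply Rmin_pos; auto). lra.
Qed.

Lemma F_as_RInt y : 0 < y -> Fdef f y = - RInt (fun u => / f u) 1 y.
Proof.
  intros Hy.
  assert (Hint : ex_RInt (fun u => / f u) y 1) by (apply inv_f_integrable; lra).
  rewrite <- (opp_RInt_swap (fun u => / f u) y 1 Hint).
  rewrite Ropp_involutive. unfold Fdef, Defs.RInt.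
  destruct excluded_middle_informative as [H | H].
  - rewrite <- RInt_Reals. reflexivity.
  - exfalso. apply H. exists (ex_RInt_Reals_0 _ _ _ Hint). exact I.
Qed.

Lemma F_deriv y : 0 < y -> derivable_pt_lim (Fdef f) y (- / f y).
Proof.
  intros Hy. apply is_derive_Reals.
  apply (is_derive_ext_loc (fun z => - RInt (fun u => / f u) 1 z)).
  { apply (locally_interval _ y 0 p_infty); simpl; auto.
    intros z Hz _. symmetry. apply F_as_RInt. exact Hz. }
  apply (is_derive_opp (fun z => RInt (fun u => / f u) 1 z) y (/ f y)).
  apply (is_derive_RInt (fun u => / f u) (fun z => RInt (fun u => / f u) 1 z) 1 y).
  { apply (locally_interval _ y 0 p_infty); simpl; auto.
    intros z Hz _. apply (@RInt_correct R_CompleteNormedModule).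
    apply inv_f_integrable; simpl in Hz; lra. }
  apply continuity_pt_filterlim, inv_f_cont. exact Hy.
Qed.

Lemma F_one : Fdef f 1 = 0.
Proof.
  rewrite F_as_RInt by lra. rewrite RInt_point. simpl. unfold zero; simpl. lra.
Qed.

Lemma F_mvt a b : 0 < a -> 0 < b ->
  exists c, Rmin a b <= c <= Rmax a b /\ Fdef f b - Fdef f a = (a - b) / f c.
Proof.
  intros Ha Hb.
  destruct (Rtotal_order a b) as [Hab | [<- | Hba]].
  - destruct (MVT_cor2 (Fdef f) (fun y => - / f y) a b Hab) as [c [Hc Hcab]].
    { intros c Hc. apply F_deriv. lra. }
    exists c. rewrite Rmin_left, Rmax_right by lra. split; [lra |].
    rewrite Hc. unfold Rdiv. ring.
  - exists a. rewrite Rmin_left, Rmax_left by lra. split; [lra |].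
    unfold Rdiv. ring.
  - destruct (MVT_cor2 (Fdef f) (fun y => - / f y) b a Hba) as [c [Hc Hcab]].
    { intros c Hc. apply F_deriv. lra. }
    exists c. rewrite Rmin_right, Rmax_left by lra. split; [lra |].
    unfold Rdiv. lra.
Qed.

Lemma F_lt_iff a b : 0 < a -> 0 < b -> (Fdef f a < Fdef f b <-> b < a).
Proof.
  intros Ha Hb.
  destruct (F_mvt a b Ha Hb) as [c [Hc Hdiff]].
  assert (Hc0 : 0 < c) by (pose proof (Rmin_pos a b Ha Hb); lra).
  assert (Hfc : 0 < / f c) by (apply Rinv_0_lt_compat, f_pos; exact Hc0).
  unfold Rdiv in Hdiff. split; intros H; nra.
Qed.

Lemma F_cont y : 0 < y -> continuity_pt (Fdef f) y.
Proof.
  intros Hy. apply derivable_continuous_pt. exists (- / f y). apply F_deriv. exact Hy.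
Qed.

Lemma quasi_monotone_near0 (phi : R -> R) delta :
  0 < delta -> (forall u v, 0 < u -> u <= v -> v < delta -> phi u <= phi v) ->
  lim_0plus (fun u => f u / phi u) 1 ->
  exists d, 0 < d /\ forall a b, 0 < a -> a <= b -> b < d -> f a <= 3 * f b.
Proof.
  intros Hdelta Hmono Hratio.
  destruct (Hratio (1 / 2) ltac:(lra)) as [d1 [Hd1 Hclose]].
  assert (Hcomp : forall y, 0 < y < d1 -> f y < 3 / 2 * phi y /\ phi y < 2 * f y).
  { intros y Hy. specialize (Hclose y Hy). apply Rabs_def2 in Hclose.
    assert (Hfy := f_pos y ltac:(lra)).
    assert (Hphi : 0 < phi y).
    { destruct (Rtotal_order (phi y) 0) as [Hneg | [Hzero | Hposit]]; auto.
      - assert (/ phi y < 0) by (apply Rinv_lt_0_compat; auto).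
        unfold Rdiv in Hclose. nra.
      - unfold Rdiv in Hclose. rewrite Hzero, Rinv_0 in Hclose. lra. }
    assert (Hq : f y = f y / phi y * phi y) by (field; lra).
    split; nra. }
  exists (Rmin d1 delta). split; [apply Rmin_pos; lra |].
  intros a b Ha Hab Hb. pose proof (Rmin_l d1 delta); pose proof (Rmin_r d1 delta).
  destruct (Hcomp a ltac:(lra)) as [Ha1 _]. destruct (Hcomp b ltac:(lra)) as [_ Hb2].
  assert (phi a <= phi b) by (apply Hmono; lra).
  lra.
Qed.

Hypothesis f_zero : f 0 = 0.

(* For a quasi-monotone f, small enough arguments have values dominated by
   3 f on any bounded interval above them: below d by quasi-monotonicity, on
   [d, B] because f(a) -> 0 while f has a positive minimum there. *)
Lemma small_values_dominated B :
  (exists d, 0 < d /\ forall a b, 0 < a -> a <= b -> b < d -> f a <= 3 * f b) ->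
  exists eta, 0 < eta /\ forall a y, 0 < a < eta -> a <= y <= B -> f a <= 3 * f y.
Proof.
  intros [d [Hd Hqm]].
  assert (Hm : exists m, 0 < m /\ forall y, d <= y <= B -> m <= f y).
  { destruct (Rle_or_lt d B) as [HdB | HdB].
    - destruct (continuity_ab_min f d B HdB (fun c _ => f_cont c)) as [y0 [Hmin Hy0]].
      exists (f y0). split; [apply f_pos; lra | exact Hmin].
    - exists 1. split; [lra | intros y Hy; lra]. }
  destruct Hm as [m [Hm Hmin]].
  destruct (f_cont 0 (3 * m) ltac:(lra)) as [eta0 [Heta0 Hsmall]].
  exists (Rmin d eta0). split; [apply Rmin_pos; lra |].
  intros a y Ha Hy. pose proof (Rmin_l d eta0); pose proof (Rmin_r d eta0).
  destruct (Rlt_or_le y d) as [Hyd | Hyd].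
  - apply Hqm; lra.
  - assert (Hfa : Rabs (f a) < 3 * m).
    { specialize (Hsmall a). simpl in Hsmall. unfold R_dist, D_x, no_cond in Hsmall.
      rewrite f_zero, !Rminus_0_r in Hsmall. apply Hsmall.
      split; [split; [exact I | lra] | rewrite Rabs_right; lra]. }
    apply Rabs_def2 in Hfa. specialize (Hmin y ltac:(lra)). lra.
Qed.

Section InverseF.

Hypothesis F_blowup : lim_0plus_infty (Fdef f).

(* By the intermediate value theorem on [a, 1], with F(a) > t, every t > 0
   is a value of F. *)
Lemma Finv_spec t : 0 < t -> 0 < Finv f t /\ Fdef f (Finv f t) = t.
Proof.
  intros Ht. unfold Finv. apply epsilon_spec.
  destruct (F_blowup t) as [d [Hd Hbig]].
  set (a := Rmin (d / 2) (1 / 2)).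
  assert (Ha1 : a <= d / 2) by apply Rmin_l.
  assert (Ha2 : a <= 1 / 2) by apply Rmin_r.
  assert (Ha0 : 0 < a) by (apply Rmin_pos; lra).
  assert (HFa := Hbig a ltac:(lra)).
  destruct (Ranalysis5.IVT_interv (fun y => t - Fdef f y) a 1) as [z [Hz Hzero]].
  - intros y Hy. apply continuity_pt_minus; [apply continuity_pt_const; intros u v; auto |].
    apply F_cont. lra.
  - lra.
  - lra.
  - rewrite F_one. lra.
  - exists z. split; lra.
Qed.

Lemma Finv_lt_iff t b : 0 < t -> 0 < b -> (Finv f t < b <-> Fdef f b < t).
Proof.
  intros Ht Hb. destruct (Finv_spec t Ht) as [Hp HFp].
  rewrite <- HFp at 2. symmetry. apply F_lt_iff; auto.
Qed.

Lemma Finv_gt_iff t a : 0 < t -> 0 < a -> (a < Finv f t <-> t < Fdef f a).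
Proof.
  intros Ht Ha. destruct (Finv_spec t Ht) as [Hp HFp].
  rewrite <- HFp at 2. symmetry. apply F_lt_iff; auto.
Qed.

Lemma Finv_small eta : 0 < eta -> exists T, 0 <= T /\ forall t, T < t -> Finv f t < eta.
Proof.
  intros Heta. exists (Rmax 0 (Fdef f eta)). split; [apply Rmax_l |].
  intros t Ht. pose proof (Rmax_l 0 (Fdef f eta)). pose proof (Rmax_r 0 (Fdef f eta)).
  apply Finv_lt_iff; lra.
Qed.

Lemma Finv_cont t0 : 0 < t0 -> forall eta, 0 < eta -> exists d, 0 < d /\
  forall t, Rabs (t - t0) < d -> 0 < t /\ Rabs (Finv f t - Finv f t0) < eta.
Proof.
  intros Ht0 eta0 Heta0.
  destruct (Finv_spec t0 Ht0) as [Hp0 HFp0].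
  set (p0 := Finv f t0) in *.
  set (eta := Rmin eta0 (p0 / 2)).
  assert (He1 : eta <= eta0) by apply Rmin_l.
  assert (He2 : eta <= p0 / 2) by apply Rmin_r.
  assert (He : 0 < eta) by (apply Rmin_pos; lra).
  assert (Hhi : Fdef f (p0 + eta) < t0) by (rewrite <- HFp0; apply F_lt_iff; lra).
  assert (Hlo : t0 < Fdef f (p0 - eta)) by (rewrite <- HFp0; apply F_lt_iff; lra).
  set (d := Rmin t0 (Rmin (t0 - Fdef f (p0 + eta)) (Fdef f (p0 - eta) - t0))).
  assert (Hd1 : d <= t0) by apply Rmin_l.
  assert (Hd2 : d <= t0 - Fdef f (p0 + eta))
    by (eapply Rle_trans; [apply Rmin_r | apply Rmin_l]).
  assert (Hd3 : d <= Fdef f (p0 - eta) - t0)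
    by (eapply Rle_trans; [apply Rmin_r | apply Rmin_r]).
  exists d. split; [repeat apply Rmin_pos; lra |].
  intros t Ht. apply Rabs_def2 in Ht.
  split; [lra |].
  assert (Finv f t < p0 + eta) by (apply Finv_lt_iff; lra).
  assert (p0 - eta < Finv f t) by (apply Finv_gt_iff; lra).
  apply Rabs_def1; lra.
Qed.

Lemma Finv_deriv t0 : 0 < t0 -> derivable_pt_lim (Finv f) t0 (- f (Finv f t0)).
Proof.
  intros Ht0 e He.
  destruct (Finv_spec t0 Ht0) as [Hp0 HFp0].
  destruct (f_cont (Finv f t0) e He) as [eta [Heta Hfclose]].
  destruct (Finv_cont t0 Ht0 eta Heta) as [d [Hd Hpclose]].
  exists (mkposreal d Hd). intros k Hk0 Hk; simpl in Hk.
  destruct (Hpclose (t0 + k) ltac:(replace (t0 + k - t0) with k by ring; exact Hk))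
    as [Ht Hp].
  destruct (Finv_spec (t0 + k) Ht) as [Hp1 HFp1].
  set (p0 := Finv f t0) in *. set (p1 := Finv f (t0 + k)) in *.
  destruct (F_mvt p0 p1 Hp0 Hp1) as [c [Hc Hdiff]].
  rewrite HFp0, HFp1 in Hdiff.
  assert (Hc0 : 0 < c) by (pose proof (Rmin_pos p0 p1 Hp0 Hp1); lra).
  assert (Hfc : 0 < f c) by (apply f_pos; exact Hc0).
  assert (Hk' : k = (p0 - p1) / f c) by (rewrite <- Hdiff; ring).
  assert (Hp01 : p0 - p1 <> 0).
  { intros Heq. apply Hk0. rewrite Hk', Heq. unfold Rdiv. ring. }
  assert (Hquot : (p1 - p0) / k = - f c) by (rewrite Hk'; field; lra).
  rewrite Hquot. replace (- f c - - f p0) with (- (f c - f p0)) by ring.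
  rewrite Rabs_Ropp.
  destruct (Req_dec c p0) as [-> | Hne].
  - rewrite Rminus_diag, Rabs_R0. lra.
  - apply (Hfclose c). split; [split; [exact I | auto] |]. simpl. unfold R_dist.
    apply Rle_lt_trans with (Rabs (p1 - p0)); [| exact Hp].
    unfold Rmin, Rmax in Hc. destruct (Rle_dec p0 p1);
      [rewrite !Rabs_right | rewrite !Rabs_left1]; lra.
Qed.

Section Solution.

Variables g x : R -> R.
Hypothesis g_pos : forall t, 0 < t -> g t > 0.
Hypothesis x_pos : forall t, 0 <= t -> 0 < x t.
Hypothesis x_deriv : forall t, 0 < t -> derivable_pt_lim x t (- f (x t) + g t).
Hypothesis forcing_small : lim_infty (fun t => g t / f (Finv f t)) 0.

Lemma F_solution_deriv t : 0 < t ->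
  derivable_pt_lim (fun s => Fdef f (x s)) t (1 - g t / f (x t)).
Proof.
  intros Ht. assert (Hfx := f_pos (x t) (x_pos t ltac:(lra))).
  replace (1 - g t / f (x t)) with (- / f (x t) * (- f (x t) + g t)) by (field; lra).
  apply (derivable_pt_lim_comp x (Fdef f)); [apply x_deriv | apply F_deriv, x_pos]; lra.
Qed.

Lemma F_solution_upper : exists C, forall t, 1 <= t -> Fdef f (x t) <= t + C.
Proof.
  exists (Fdef f (x 1) - 1). intros t Ht.
  assert (Hinc : Fdef f (x t) <= Fdef f (x 1) + 1 * (t - 1)).
  { apply (increment_le (fun s => Fdef f (x s)) (fun s => 1 - g s / f (x s))); auto.
    - intros s Hs. apply F_solution_deriv. lra.
    - intros s Hs. assert (Hfx := f_pos (x s) (x_pos s ltac:(lra))).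
      assert (0 < g s / f (x s)) by (apply Rdiv_lt_0_compat; [apply g_pos |]; lra).
      lra. }
  lra.
Qed.

Lemma forcing_below c : 0 < c ->
  exists T, 0 <= T /\ forall t, T < t -> g t < c * f (Finv f t).
Proof.
  intros Hc. destruct (forcing_small c Hc) as [T HT].
  exists (Rmax 0 T). split; [apply Rmax_l |]. intros t Ht.
  pose proof (Rmax_l 0 T); pose proof (Rmax_r 0 T).
  specialize (HT t ltac:(lra)). rewrite Rminus_0_r in HT. apply Rabs_def2 in HT.
  destruct (Finv_spec t ltac:(lra)) as [Hp _].
  assert (Hfp := f_pos _ Hp).
  destruct HT as [HT _]. apply (Rmult_lt_compat_r (f (Finv f t))) in HT; auto.
  unfold Rdiv in HT. rewrite Rmult_assoc, Rinv_l, Rmult_1_r in HT by lra.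
  lra.
Qed.

(* x is eventually bounded: once g < f(F^{-1}), the function x + F^{-1}
   is nonincreasing. *)
Lemma solution_bounded : exists T B, 0 < T /\ forall t, T <= t -> x t <= B.
Proof.
  destruct (forcing_below 1 ltac:(lra)) as [T0 [HT0 Hg]].
  exists (T0 + 1), (x (T0 + 1) + Finv f (T0 + 1)). split; [lra |]. intros t Ht.
  assert (Hinc : x t + Finv f t <= x (T0 + 1) + Finv f (T0 + 1) + 0 * (t - (T0 + 1))).
  { apply (increment_le (fun s => x s + Finv f s)
             (fun s => (- f (x s) + g s) + - f (Finv f s))); auto.
    - intros s Hs. apply (derivable_pt_lim_plus x (Finv f));
        [apply x_deriv | apply Finv_deriv]; lra.
    - intros s Hs. specialize (Hg s ltac:(lra)).
      assert (Hfx := f_pos (x s) (x_pos s ltac:(lra))). lra. }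
  destruct (Finv_spec t ltac:(lra)) as [Hp _].
  lra.
Qed.

Hypothesis f_quasi_monotone :
  exists d, 0 < d /\ forall a b, 0 < a -> a <= b -> b < d -> f a <= 3 * f b.

Lemma forcing_negligible ep : 0 < ep -> exists T, 0 < T /\
  forall t, T <= t -> Fdef f (x t) <= t -> g t / f (x t) < ep.
Proof.
  intros Hep.
  destruct solution_bounded as [T1 [B [HT1 Hbound]]].
  destruct (small_values_dominated B f_quasi_monotone) as [eta [Heta Hdom]].
  destruct (Finv_small eta Heta) as [T2 [HT2 Hsmall]].
  destruct (forcing_below (ep / 3) ltac:(lra)) as [T3 [HT3 Hg]].
  set (T := Rmax T1 (Rmax T2 T3) + 1).
  assert (H1 := Rmax_l T1 (Rmax T2 T3)). assert (H2 := Rmax_r T1 (Rmax T2 T3)).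
  assert (H3 := Rmax_l T2 T3). assert (H4 := Rmax_r T2 T3).
  exists T. split; [unfold T; lra |]. intros t Ht Hu. unfold T in Ht.
  destruct (Finv_spec t ltac:(lra)) as [Hp HFp].
  assert (Hfx := f_pos (x t) (x_pos t ltac:(lra))).
  assert (Hpx : Finv f t <= x t).
  { destruct (Rle_or_lt (Finv f t) (x t)) as [| Hlt]; auto.
    assert (Fdef f (Finv f t) < Fdef f (x t)) by (apply F_lt_iff; auto; apply x_pos; lra).
    lra. }
  assert (Hfp : f (Finv f t) <= 3 * f (x t)).
  { apply Hdom; split; auto. apply Hsmall; lra. apply Hbound; lra. }
  specialize (Hg t ltac:(lra)).
  unfold Rdiv. apply (Rmult_lt_reg_r (f (x t))); auto.
  rewrite Rmult_assoc, Rinv_l, Rmult_1_r by lra.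
  nra.
Qed.

(* Lower barrier: eventually F(x(t)) >= (1 - ep) t + K.  Where
   h(t) = F(x(t)) - (1 - ep) t lies below K < 0 we have F(x(t)) <= t, so the
   key estimate gives h' > 0 there and h cannot cross K. *)
Lemma F_solution_lower ep : 0 < ep ->
  exists T K, forall t, T <= t -> (1 - ep) * t + K <= Fdef f (x t).
Proof.
  intros Hep. destruct (forcing_negligible ep Hep) as [T [HT Hneg]].
  set (h := fun s => Fdef f (x s) - s * (1 - ep)).
  set (h' := fun s => (1 - g s / f (x s)) - 1 * (1 - ep)).
  assert (Hh : forall s, T <= s -> derivable_pt_lim h s (h' s)).
  { intros s Hs. apply (derivable_pt_lim_minus (fun s => Fdef f (x s))).
    - apply F_solution_deriv. lra.
    - apply derivable_pt_lim_scal_right, derivable_pt_lim_id. }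
  set (K := Rmin 0 (h T) - 1).
  assert (HK0 : K < 0) by (unfold K; pose proof (Rmin_l 0 (h T)); lra).
  assert (HKT : K < h T) by (unfold K; pose proof (Rmin_r 0 (h T)); lra).
  exists T, K. intros t Ht.
  assert (Hht : K < h t); [| unfold h in Hht; lra].
  apply (stays_above h h' T t K Ht); auto.
  - apply (derivable_cont_on_interval h h'). intros s Hs. apply Hh. lra.
  - intros s Hs. apply Hh. lra.
  - intros s Hs HhK. unfold h in HhK.
    assert (Hs' := Hneg s ltac:(lra) ltac:(nra)).
    unfold h'. lra.
Qed.

End Solution.
End InverseF.
End PrimitiveF.

Theorem theorem1 (f g : R -> R) (xi : R) (x : R -> R) :
  (* standing assumptions *)
  locally_lipschitz f ->
  f 0 = 0 ->
  (forall u, u <> 0 -> u * f u > 0) ->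
  cont_on_nonneg g ->
  (forall t, 0 < t -> g t > 0) ->
  0 < xi ->
  lim_0plus_infty (Fdef f) ->
  (* x is the continuous solution of x' = -f(x) + g, x(0) = xi *)
  cont_on_nonneg x ->
  x 0 = xi ->
  (forall t, 0 < t -> derivable_pt_lim x t (- f (x t) + g t)) ->
  (* regular variation-type comparison function phi *)
  (exists (delta : R) (phi : R -> R), 0 < delta /\
     (forall u v, 0 < u -> u <= v -> v < delta -> phi u <= phi v) /\
     lim_0plus (fun u => f u / phi u) 1) ->
  lim_infty (fun t => g t / f (Finv f t)) 0 ->
  lim_infty (fun t => Fdef f (x t) / t) 1.
Proof.
  intros Hlip Hf0 Hsign _ Hg Hxi Hblowup Hxc Hx0 Hxd
    [delta [phi [Hdelta [Hmono Hratio]]]] Hforcing.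
  assert (Hfc := lipschitz_continuous f Hlip).
  assert (Hf_nonpos : forall y, y <= 0 -> f y <= 0).
  { intros y Hy. destruct (Req_dec y 0) as [-> | Hne]; [lra |].
    specialize (Hsign y Hne). nra. }
  assert (Hxpos := solution_pos f g x Hf_nonpos Hg Hxc ltac:(lra) Hxd).
  assert (Hqm := quasi_monotone_near0 f Hsign phi delta Hdelta Hmono Hratio).
  apply ratio_to_one.
  - exact (F_solution_upper f Hfc Hsign g x Hg Hxpos Hxd).
  - exact (F_solution_lower f Hfc Hsign Hf0 Hblowup g x Hxpos Hxd Hforcing Hqm).
Qed.
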